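(* Assume the Schanuel conjecture. Let $b\in\overline{\mathbb{Q}}\setminus\{0,1\}$ with a fixed logarithm $\ln b$, and let $a_1,\dots,a_m$ be a ladder with respect to $b$ such that $1,a_1,\dots,a_m$ are linearly independent over $\mathbb{Q}$. Then for each $k=1,\dots,m$ exactly one of $a_k,\,b^{a_k}$ is transcendental over $F_{k-1}$; denoting it $b_k$, the numbers $\ln b,b_1,\dots,b_m$ are algebraically independent over $\mathbb{Q}$. In particular $\ln b\notin\overline{F_m}$.
   Context: Schanuel conjecture: if $z_1,\dots,z_n\in\mathbb{C}$ are linearly independent over $\mathbb{Q}$, then the field $\mathbb{Q}(z_1,\dots,z_n,e^{z_1},\dots,e^{z_n})$ has transcendence degree at least $n$ over $\mathbb{Q}$ (at least $n$ of these $2n$ numbers are algebraically independent over $\mathbb{Q}$). $b^x:=e^{x\ln b}$ for the fixed nonzero value $\ln b$. $\overline{F}$ denotes the algebraic closure in $\mathbb{C}$ of a field $F$. Ladder: for $a_1,\dots,a_m\in\mathbb{C}$ put $F_0:=\mathbb{Q}$ and $F_k:=\mathbb{Q}(a_1,\dots,a_k,b^{a_1},\dots,b^{a_k})$; the sequence is a ladder if for every $1\le k\le m$, $a_k\in\overline{F_{k-1}}$ or $b^{a_k}\in\overline{F_{k-1}}$. *)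

From HB Require Import structures.
From mathcomp Require Import all_boot all_order all_algebra.
From mathcomp Require Import reals sequences exp trigo.
From mathcomp Require Import complex.
From mathcomp Require Import mpoly.

Set Implicit Arguments.
Unset Strict Implicit.
Unset Printing Implicit Defensive.
Import Order.TTheory GRing.Theory Num.Theory.
Local Open Scope ring_scope.

Section Defs.
Variable R : realType.
Local Notation C := R[i].

Definition cexp (z : C) : C :=
  let: Complex x y := z in Complex (expR x * cos y) (expR x * sin y).

(* b^x := exp(x ln b) for the fixed logarithm lnb *)
Definition cpow (lnb x : C) : C := cexp (x * lnb).

Definition qeval (n : nat) (v : 'I_n -> C) (p : mpoly.mpoly n rat) : C :=
  mpoly.mmap (fun c : rat => ratr c) v p.

Definition alg_indep (n : nat) (x : 'I_n -> C) : Prop :=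
  forall p : mpoly.mpoly n rat, qeval x p = 0 -> p = 0.

Definition Qlin_indep (n : nat) (z : 'I_n -> C) : Prop :=
  forall c : 'I_n -> rat, \sum_(i < n) ratr (c i) * z i = 0 -> forall i, c i = 0.

(* Schanuel's conjecture (as stated in the context): among the 2n numbers
   z_1..z_n, e^z_1..e^z_n there are n algebraically independent ones. *)
Definition Schanuel : Prop :=
  forall (n : nat) (z : 'I_n -> C), Qlin_indep z ->
    exists f : 'I_n -> 'I_(n + n), injective f /\
      alg_indep (fun i => (fun j : 'I_(n + n) =>
          match split j with inl k => z k | inr k => cexp (z k) end) (f i)).

Definition gen_field (s : seq C) : C -> Prop :=
  fun x => exists p q : mpoly.mpoly (size s) rat,
    qeval (fun i => tnth (in_tuple s) i) q != 0 /\
    x = qeval (fun i => tnth (in_tuple s) i) p / qeval (fun i => tnth (in_tuple s) i) q.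

Definition algebraic_over (F : C -> Prop) (x : C) : Prop :=
  exists p : {poly C}, p != 0 /\ (forall i, F p`_i) /\ root p x.

Definition algebraicQ (x : C) : Prop :=
  exists p : {poly rat}, p != 0 /\ root (map_poly (fun c : rat => ratr c) p) x.

(* the ladder fields F_k = Q(a_1..a_k, b^a_1..b^a_k), for a : 'I_m -> C
   (0-based: F k uses the first k entries a_0..a_(k-1)) *)
Definition ladderF (m : nat) (lnb : C) (a : 'I_m -> C) (k : nat) : C -> Prop :=
  let s := [seq a i | i <- [seq j <- enum 'I_m | (nat_of_ord j < k)%N]] in
  gen_field (s ++ [seq cpow lnb x | x <- s]).

Definition ladder (m : nat) (lnb : C) (a : 'I_m -> C) : Prop :=
  forall k : 'I_m, algebraic_over (ladderF lnb a k) (a k) \/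
                   algebraic_over (ladderF lnb a k) (cpow lnb (a k)).

End Defs.

(* Schanuel's conjecture, applied to ln b and the a_k ln b (linearly
   independent over Q because 1, a_1, ..., a_m are), yields m + 1 algebraically
   independent numbers among ln b, a_k ln b, b and b^(a_k). As b is algebraic,
   there is thus no set X of m numbers over which ln b and all the a_k, b^(a_k)
   are algebraic: by the exchange lemma, the field generated by X contains no
   m + 1 successively transcendental numbers.
   Along the ladder, a_k and b^(a_k) are algebraic over F_(k-1)(b_k), hence
   over any X containing b_1, ..., b_k. Each claim is refuted by such an X:
   X = {b_1, ..., b_m} if ln b is algebraic over F_m, and X = {ln b} together
   with the b_j, j <> k, if a_k and b^(a_k) are both algebraic over F_(k-1) or
   if b_k is algebraic over ln b, b_1, ..., b_(k-1). *)

From HB Require Import structures.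
From mathcomp Require Import all_boot all_order all_algebra.
From mathcomp Require Import reals sequences exp trigo.
From mathcomp Require Import complex.
From mathcomp Require Import mpoly.
From mathcomp Require Import boolp ring.
Import Order.TTheory GRing.Theory Num.Theory.
Local Open Scope ring_scope.

Set Implicit Arguments.
Unset Strict Implicit.
Unset Printing Implicit Defensive.

Section SubfieldPred.
Variable F : fieldType.

Record is_subfield (S : F -> Prop) : Prop := IsSubfield {
  subfield1 : S 1;
  subfieldB : forall x y, S x -> S y -> S (x - y);
  subfieldM : forall x y, S x -> S y -> S (x * y);
  subfieldV : forall x, S x -> S x^-1 }.

Record is_subring (A : F -> Prop) : Prop := IsSubring {
  subring1 : A 1;
  subringB : forall x y, A x -> A y -> A (x - y);
  subringM : forall x y, A x -> A y -> A (x * y) }.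

Definition ratios (A : F -> Prop) (z : F) : Prop :=
  exists x y, [/\ A x, A y, y != 0 & z = x / y].

Lemma ratios_id (A : F -> Prop) z : is_subring A -> A z -> ratios A z.
Proof. by move=> hA Az; exists z, 1; rewrite oner_neq0 divr1; split=> //; case: hA. Qed.

Lemma ratios_subfield (A : F -> Prop) : is_subring A -> is_subfield (ratios A).
Proof.
move=> hA; split.
- exact/ratios_id/(subring1 hA).
- move=> _ _ [x [y [Ax Ay y0 ->]]] [z [t [Az At t0 ->]]].
  exists (x * t - z * y), (y * t); split; rewrite ?mulf_neq0 //.
  + by apply: (subringB hA); apply: (subringM hA).
  + exact: (subringM hA).
  + by field; apply/andP.
- move=> _ _ [x [y [Ax Ay y0 ->]]] [z [t [Az At t0 ->]]].
  exists (x * z), (y * t); split; rewrite ?mulf_neq0 //; try exact: (subringM hA).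
  by field; apply/andP.
- move=> _ [x [y [Ax Ay y0 ->]]].
  have [-> | x0] := eqVneq x 0; last by exists y, x; rewrite invf_div.
  rewrite mul0r invr0; apply: ratios_id; rewrite // -(subrr 1).
  by apply: (subringB hA); apply: (subring1 hA).
Qed.

Section Subfield.
Variables (S : F -> Prop) (hS : is_subfield S).

(* The boolean predicate is indexed by [hS] so that the canonical
   [divringClosed] instance below can be found from it. *)
Definition subfield_pred of is_subfield S : {pred F} := fun z => `[< S z >].

Lemma subfield_predP z : reflect (S z) (z \in subfield_pred hS).
Proof. exact: asboolP. Qed.

Lemma subfield_pred_divring_closed : divring_closed (subfield_pred hS).
Proof.
case: hS => S1 SB SM SV; split.
- exact/subfield_predP.
- by move=> x y /subfield_predP Sx /subfield_predP Sy; apply/subfield_predP/SB.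
- by move=> x y /subfield_predP Sx /subfield_predP Sy; apply/subfield_predP/SM/SV.
Qed.

HB.instance Definition _ :=
  GRing.isDivringClosed.Build F (subfield_pred hS) subfield_pred_divring_closed.

Record subfield_type := SubfieldElem {
  subfield_val :> F;
  subfield_valP : subfield_val \in subfield_pred hS }.
HB.instance Definition _ := [isSub for subfield_val].
HB.instance Definition _ := [Choice of subfield_type by <:].
HB.instance Definition _ := [SubChoice_isSubIntegralDomain of subfield_type by <:].
HB.instance Definition _ := [SubIntegralDomain_isSubField of subfield_type by <:].

Definition subfield_incl : {rmorphism subfield_type -> F} :=
  GRing.RMorphism.clone _ _ (val : subfield_type -> F) _.

Lemma subfield_incl_mem (k : subfield_type) : S (subfield_incl k).
Proof. by apply/subfield_predP; case: k. Qed.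

Lemma subfield_incl_onto z : S z -> exists k, z = subfield_incl k.
Proof. by move/subfield_predP=> Sz; exists (SubfieldElem Sz). Qed.

Lemma poly_subfield_incl (p : {poly F}) :
  (forall i, S p`_i) -> exists q, p = map_poly subfield_incl q.
Proof.
move=> Sp; have S0 : 0 \in subfield_pred hS := rpred0 _.
exists (\poly_(i < size p) insubd (SubfieldElem S0) p`_i).
apply/polyP => i; rewrite coef_map coef_poly /=.
case: ltnP => [_ | le_p_i]; first by rewrite val_insubd; case: subfield_predP.
by rewrite nth_default // rmorph0.
Qed.

End Subfield.
End SubfieldPred.

Section QEval.
Variables (R : realType) (n : nat) (v : 'I_n -> R[i]).

HB.instance Definition _ :=
  GRing.RMorphism.copy (qeval v) (mmap (fun c : rat => ratr c) v).

Lemma qevalC c : qeval v c%:MP = ratr c.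
Proof. exact: mmapC. Qed.

Lemma qevalX i : qeval v 'X_i = v i.
Proof. by rewrite /qeval mmapX mmap1U. Qed.

Lemma qevalE p :
  qeval v p = \sum_(m <- msupp p) ratr p@_m * \prod_(i < n) v i ^+ m i.
Proof. by []. Qed.

End QEval.

Section GenField.
Variable R : realType.
Local Notation C := R[i].

Lemma qeval_mem (S : C -> Prop) (hS : is_subfield S) n (v : 'I_n -> C) p :
  (forall i, S (v i)) -> S (qeval v p).
Proof.
move=> Sv; apply/(subfield_predP hS); rewrite qevalE; apply: rpred_sum => m _.
rewrite rpredM ?rpred_rat //; apply: rpred_prod => i _.
exact/rpredX/(subfield_predP hS).
Qed.

Lemma ratr_mem (S : C -> Prop) (hS : is_subfield S) c : S (ratr c).
Proof. exact/(subfield_predP hS)/rpred_rat. Qed.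

Lemma gen_field_subfield (s : seq C) : is_subfield (gen_field s).
Proof.
pose v i := tnth (in_tuple s) i.
have hA : is_subring (fun z => exists p, z = qeval v p).
  split; first by exists 1; rewrite rmorph1.
  - by move=> _ _ [p ->] [q ->]; exists (p - q); rewrite rmorphB.
  - by move=> _ _ [p ->] [q ->]; exists (p * q); rewrite rmorphM.
suff -> : gen_field s = ratios (fun z => exists p, z = qeval v p).
  exact: ratios_subfield.
apply/funext => z; apply/propext; split.
- by move=> [p [q [q0 ->]]]; exists (qeval v p), (qeval v q); split=> //; [exists p | exists q].
- by move=> [_ [_ [[p ->] [q ->] q0 ->]]]; exists p, q.
Qed.

Lemma gen_field_mem (s : seq C) c : c \in s -> gen_field s c.
Proof.
move=> cs; have si : (index c s < size s)%N by rewrite index_mem.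
exists 'X_(Ordinal si), 1; rewrite rmorph1 oner_neq0 divr1 qevalX.
by rewrite (tnth_nth 0) /= nth_index.
Qed.

Lemma gen_field_min (S : C -> Prop) (hS : is_subfield S) (s : seq C) :
  (forall c, c \in s -> S c) -> forall z, gen_field s z -> S z.
Proof.
move=> Ss z [p [q [q0 ->]]]; apply: (subfieldM hS); last apply: (subfieldV hS);
  by apply: qeval_mem => // i; apply: Ss; rewrite (tnth_nth 0) mem_nth.
Qed.

Lemma algebraic_overE (S : C -> Prop) (hS : is_subfield S) z :
  algebraic_over S z <-> algebraicOver (subfield_incl hS) z.
Proof.
split.
- move=> [p [p0 [Sp pz]]]; have [q def_p] := poly_subfield_incl hS Sp.
  by exists q; rewrite -?def_p //; apply: contraNneq p0 => q0; rewrite def_p q0 rmorph0.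
- move=> [q q0 qz]; exists (map_poly (subfield_incl hS) q).
  split; first by rewrite map_poly_eq0.
  by split=> // i; rewrite coef_map; apply: subfield_incl_mem.
Qed.

Lemma algebraic_over_subfield (S : C -> Prop) :
  is_subfield S -> is_subfield (algebraic_over S).
Proof.
move=> hS; split.
- exact/(algebraic_overE hS)/algebraic1.
- move=> x y /(algebraic_overE hS) Sx /(algebraic_overE hS) Sy.
  exact/(algebraic_overE hS)/algebraic_sub.
- move=> x y /(algebraic_overE hS) Sx /(algebraic_overE hS) Sy.
  exact/(algebraic_overE hS)/algebraic_mul.
- by move=> x /(algebraic_overE hS) Sx; apply/(algebraic_overE hS)/algebraic_inv.
Qed.

Lemma algebraic_over_id (S : C -> Prop) (hS : is_subfield S) z :
  S z -> algebraic_over S z.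
Proof.
by move=> /(subfield_incl_onto hS) [k ->]; apply/(algebraic_overE hS)/algebraic_id.
Qed.

Lemma algebraic_over_root (S : C -> Prop) (hS : is_subfield S) (p : {poly C}) z :
  p != 0 -> (forall i, algebraic_over S p`_i) -> root p z -> algebraic_over S z.
Proof.
move=> p0 Sp pz; apply/(algebraic_overE hS)/integral_algebraic.
apply: (integral_root p0 pz) => w /(nthP 0) [i _ <-].
exact/integral_algebraic/(algebraic_overE hS).
Qed.

Definition algebraic_gen (s : seq C) : C -> Prop := algebraic_over (gen_field s).

Lemma algebraic_gen_subfield (s : seq C) : is_subfield (algebraic_gen s).
Proof. exact/algebraic_over_subfield/gen_field_subfield. Qed.

Lemma algebraic_gen_id (s : seq C) z : gen_field s z -> algebraic_gen s z.
Proof. exact/algebraic_over_id/gen_field_subfield. Qed.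

Lemma algebraic_gen_mem (s : seq C) c : c \in s -> algebraic_gen s c.
Proof. by move=> cs; apply/algebraic_gen_id/gen_field_mem. Qed.

Lemma algebraic_over_gen (S : C -> Prop) (s : seq C) :
  (forall z, S z -> algebraic_gen s z) -> forall z, algebraic_over S z -> algebraic_gen s z.
Proof.
move=> Ss z [p [p0 [Sp pz]]].
by apply: (algebraic_over_root (gen_field_subfield s) p0) => // i; apply: Ss.
Qed.

Lemma algebraic_gen_trans (s t : seq C) :
  (forall c, c \in s -> algebraic_gen t c) ->
  forall z, algebraic_gen s z -> algebraic_gen t z.
Proof.
by move=> st; apply: algebraic_over_gen; apply: gen_field_min st; apply: algebraic_gen_subfield.
Qed.

Lemma algebraic_gen_sub (s t : seq C) :
  {subset s <= t} -> forall z, algebraic_gen s z -> algebraic_gen t z.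
Proof. by move=> st; apply: algebraic_gen_trans => c /st; apply: algebraic_gen_mem. Qed.

Lemma algebraicQ_gen (s : seq C) z : algebraicQ z -> algebraic_gen s z.
Proof.
move=> [p [p0 pz]]; exists (map_poly (fun c : rat => ratr c) p).
split; first by rewrite map_poly_eq0.
by split=> // i; rewrite coef_map; apply: ratr_mem; apply: gen_field_subfield.
Qed.

End GenField.

Lemma clear_poly_denominators (A : nzRingType) (E : fieldType) (f : {rmorphism A -> E})
    (p : {poly E}) :
  (forall i, exists a b, f b != 0 /\ p`_i = f a / f b) ->
  exists c (q : {poly A}), c != 0 /\ map_poly f q = c *: p.
Proof.
move=> hp; have hp' i : exists ab : A * A, f ab.2 != 0 /\ p`_i = f ab.1 / f ab.2.
  by have [a [b hab]] := hp i; exists (a, b).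
have [ab hab] := choice hp'.
pose N := size p; pose G := \prod_(i < N) (ab i).2.
pose h (i : 'I_N) := (ab i).1 * \prod_(j < N | j != i) (ab j).2.
have G0 : f G != 0 by rewrite rmorph_prod; apply/prodf_neq0 => i _; case: (hab i).
have fh i : f (h i) = f G * p`_i.
  rewrite rmorphM !rmorph_prod [in RHS](bigD1 i) //=.
  by case: (hab i) => b0 ->; field.
exists (f G), (\poly_(i < N) if insub i is Some j then h j else 0); split=> //.
apply/polyP => i; rewrite coef_map coefZ coef_poly /=.
case: ltnP => iN; first by rewrite insubT /= fh.
by rewrite rmorph0 nth_default ?mulr0.
Qed.

Lemma horner_map_eval (S : comNzRingType) (L : {poly {poly S}}) x y :
  (map_poly (horner_eval y) L).[x] = L.[x, y].
Proof. by rewrite -horner_swapXY horner2_swapXY. Qed.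

Section Exchange.
Variable R : realType.
Local Notation C := R[i].
Variable v : seq C.
Local Notation K := (subfield_type (gen_field_subfield v)).
Local Notation io := (subfield_incl (gen_field_subfield v)).
Local Notation ev x := (horner_morph (fun k : K => mulrC x (io k))).
Local Notation lift2 U := (map_poly (map_poly io) U).

(* [u.[x, y]] evaluates the outer variable of [u] at [x], the inner one at [y]. *)

Lemma gen_field_cat (t : seq C) z : gen_field v z -> gen_field (v ++ t) z.
Proof.
apply: gen_field_min; first exact: gen_field_subfield.
by move=> c cv; apply: gen_field_mem; rewrite mem_cat cv.
Qed.

Lemma gen_field_rcons_frac x z : gen_field (v ++ [:: x]) z ->
  exists f g : {poly K}, ev x g != 0 /\ z = ev x f / ev x g.
Proof.
have hA : is_subring (fun w => exists f, w = ev x f).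
  split; first by exists 1; rewrite rmorph1.
  - by move=> _ _ [f ->] [g ->]; exists (f - g); rewrite rmorphB.
  - by move=> _ _ [f ->] [g ->]; exists (f * g); rewrite rmorphM.
move=> /(gen_field_min (ratios_subfield hA)) [c|].
- rewrite mem_cat inE => /orP [cv | /eqP ->]; apply: ratios_id => //.
    have [k ->] := subfield_incl_onto (gen_field_subfield v) (gen_field_mem cv).
    by exists k%:P; rewrite horner_morphC.
  by exists 'X; rewrite horner_morphX.
- by move=> _ [_ [[f ->] [g ->] g0 ->]]; exists f, g.
Qed.

Lemma rcons_algebraic_root2 x y : algebraic_gen (v ++ [:: x]) y ->
  exists U : {poly {poly K}}, U != 0 /\ (lift2 U).[y, x] = 0.
Proof.
move=> [p [p0 [hp py]]].
have [c [U [c0 eU]]] := clear_poly_denominators (fun i => gen_field_rcons_frac (hp i)).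
exists U; split.
  apply: contraNneq p0 => U0; move: eU; rewrite U0 rmorph0 => /esym/eqP.
  by rewrite scaler_eq0 (negbTE c0).
rewrite -(horner_map_eval (S := C)) -map_poly_comp (eq_map_poly (g := ev x)) // eU.
by rewrite hornerZ (rootP py) mulr0.
Qed.

Lemma root2_algebraic_gen (V : {poly {poly K}}) x y :
  V != 0 -> (lift2 V).[x, y] = 0 -> ~ algebraic_gen v y ->
  algebraic_gen (v ++ [:: y]) x.
Proof.
move=> V0 Vxy ty; pose W := map_poly (horner_eval y) (lift2 V).
(* A coefficient of V vanishing at the transcendental y must be 0. *)
have WE j : W`_j = (map_poly io V`_j).[y] by rewrite /W !coef_map.
have W0 : W != 0.
  apply: contra_neq V0 => W0; apply/polyP => j; rewrite coef0.
  apply: contra_notP ty => Vj0; exists (map_poly io V`_j).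
  split; first by rewrite map_poly_eq0; apply/eqP.
  split; last by apply/rootP; rewrite -WE W0 coef0.
  by move=> i; rewrite coef_map; apply: subfield_incl_mem.
exists W; split=> //; split; last by rewrite /root (horner_map_eval (S := C)) Vxy.
move=> j; rewrite WE.
have hS := gen_field_subfield (v ++ [:: y]).
apply/(subfield_predP hS)/rpred_horner.
  apply/polyOverP => i; rewrite coef_map; apply/(subfield_predP hS)/gen_field_cat.
  exact: subfield_incl_mem.
by apply/(subfield_predP hS)/gen_field_mem; rewrite mem_cat mem_head orbT.
Qed.

Lemma algebraic_gen_exchange x y :
  algebraic_gen (v ++ [:: x]) y -> ~ algebraic_gen v y ->
  algebraic_gen (v ++ [:: y]) x.
Proof.
move=> /rcons_algebraic_root2 [U [U0 Uyx]]; apply: (root2_algebraic_gen (V := swapXY U)).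
  by rewrite swapXY_eq0.
by rewrite -swapXY_map horner2_swapXY.
Qed.

End Exchange.

Section Steinitz.
Variable R : realType.
Local Notation C := R[i].

Lemma algebraic_gen_first_witness (y : C) (X u : seq C) :
  algebraic_gen (u ++ X) y -> ~ algebraic_gen u y ->
  exists X1 x X2, [/\ X = X1 ++ x :: X2,
    algebraic_gen ((u ++ X1) ++ [:: x]) y & ~ algebraic_gen (u ++ X1) y].
Proof.
elim: X u => [|x X IH] u; first by rewrite cats0.
move=> yX ty; have [yx | tyx] := EM (algebraic_gen (u ++ [:: x]) y).
  by exists [::], x, X; rewrite !cats0.
have yX' : algebraic_gen ((u ++ [:: x]) ++ X) y by rewrite -catA.
have [X1 [x' [X2 [-> yx' tyX1]]]] := IH (u ++ [:: x]) yX' tyx.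
by exists (x :: X1), x', X2; move: yx' tyX1; rewrite -!catA.
Qed.

Lemma transcendental_chain_size (u X ys : seq C) :
  (forall i, (i < size ys)%N -> ~ algebraic_gen (u ++ take i ys) (nth 0 ys i)) ->
  (forall y, y \in ys -> algebraic_gen (u ++ X) y) -> (size ys <= size X)%N.
Proof.
elim: ys u X => [//|y ys IH] u X chain ysX.
have ty : ~ algebraic_gen u y by have := chain 0%N isT; rewrite cats0.
have [X1 [x [X2 [defX yx tyX1]]]] :=
  algebraic_gen_first_witness (ysX y (mem_head _ _)) ty.
have xy := algebraic_gen_exchange yx tyX1.
suff : (size ys <= size (X1 ++ X2))%N by rewrite defX !size_cat /= addnS.
apply: (IH (u ++ [:: y])) => [i lt_i | z zys].
  by rewrite -catA; apply: (chain i.+1).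
apply: algebraic_gen_trans (ysX z _); last by rewrite inE zys orbT.
move=> c; rewrite defX mem_cat => /orP [cu | ].
  by apply: algebraic_gen_mem; rewrite !mem_cat cu.
rewrite mem_cat inE => /or3P [cX1 | /eqP -> | cX2].
- by apply: algebraic_gen_mem; rewrite !mem_cat cX1 !orbT.
- apply: algebraic_gen_sub xy => w; rewrite !mem_cat !mem_seq1.
  by case/orP => [/orP [] -> | ->]; rewrite ?orbT.
- by apply: algebraic_gen_mem; rewrite !mem_cat cX2 !orbT.
Qed.

End Steinitz.

Section Multinomials.
Variable n : nat.
Local Notation widen := (widen_ord (leqnSn n)).

Definition mnm_front (m : 'X_{1..n.+1}) : 'X_{1..n} := [multinom m (widen i) | i < n].

Lemma mnm_front_eq (m1 m2 : 'X_{1..n.+1}) :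
  mnm_front m1 = mnm_front m2 -> m1 ord_max = m2 ord_max -> m1 = m2.
Proof.
move=> /mnmP e1 e2; apply/mnmP => i.
have [j ->|->] := unliftP ord_max i; last exact: e2.
have := e1 j; rewrite !mnmE.
suff -> : lift ord_max j = widen j by [].
by apply: val_inj; rewrite /= /bump leqNgt ltn_ord.
Qed.

Lemma muni_coef (p : {mpoly rat[n.+1]}) (m : 'X_{1..n.+1}) :
  ((muni p)`_(m ord_max))@_(mnm_front m) = p@_m.
Proof.
rewrite muniE coef_sum raddf_sum /=.
rewrite (eq_bigr (fun m0 => p@_m0 * (m0 == m)%:R)); last first.
  move=> m0 _; rewrite coefZ coefXn.
  have [-> | ne] := eqVneq m0 m.
    by rewrite eqxx mulr1 mcoeffZ mcoeffX eqxx mulr1.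
  case: eqP => h; last by rewrite mulr0 mcoeff0 mulr0.
  rewrite mulr1 mcoeffZ mcoeffX; case: eqP => h2; last by rewrite !mulr0.
  by case/eqP: ne; apply: mnm_front_eq => //; rewrite h.
have [mp | mp] := boolP (m \in msupp p).
  rewrite (bigD1_seq m) ?msupp_uniq //= eqxx mulr1 big1 ?addr0 //.
  by move=> m0 /negbTE ->; rewrite mulr0.
rewrite big1_seq ?(memN_msupp_eq0 mp) // => m0 /andP [_ m0p].
by have [e|] := eqVneq m0 m; [rewrite -e m0p in mp | rewrite mulr0].
Qed.

Lemma muni_eq0 (p : {mpoly rat[n.+1]}) : muni p = 0 -> p = 0.
Proof. by move=> p0; apply/mpolyP => m; rewrite -muni_coef p0 coef0 !mcoeff0. Qed.

End Multinomials.

Section AlgebraicIndependence.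
Variable R : realType.
Local Notation C := R[i].

Lemma nth_codom_ord n (w : 'I_n -> C) (i : 'I_n) : nth 0 (codom w) i = w i.
Proof. by rewrite codomE (nth_map i) ?size_enum_ord // nth_ord_enum. Qed.

Lemma size_codom_ord n (w : 'I_n -> C) : size (codom w) = n.
Proof. by rewrite size_codom card_ord. Qed.

Lemma mem_take_codom n (w : 'I_n -> C) i c :
  c \in take i (codom w) -> exists2 j : 'I_n, (j < i)%N & c = w j.
Proof.
move=> /(nthP 0) [t]; rewrite size_take_min leq_min size_codom_ord => /andP [lt_ti lt_tn] <-.
by exists (Ordinal lt_tn); rewrite // nth_take // (nth_codom_ord w (Ordinal lt_tn)).
Qed.

Lemma take_codom_widen n (w : 'I_n.+1 -> C) i : (i <= n)%N ->
  take i (codom w) = take i (codom (fun j : 'I_n => w (widen_ord (leqnSn n) j))).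
Proof.
move=> le_in; rewrite [in LHS]codomE enum_ordSr map_rcons -map_comp -codomE.
rewrite -cats1 take_cat size_codom_ord; case: ltnP => // le_ni.
have -> : i = n by apply/eqP; rewrite eqn_leq le_in.
by rewrite subnn take0 cats0 take_oversize ?size_codom_ord.
Qed.

Lemma qeval_muni n (w : 'I_n.+1 -> C) P :
  qeval w P = (map_poly (qeval (fun j => w (widen_ord (leqnSn n) j))) (muni P)).[w ord_max].
Proof.
rewrite muniE qevalE rmorph_sum horner_sum /=; apply: eq_bigr => m _.
rewrite map_polyZ /= map_polyXn hornerZ hornerXn.
rewrite /qeval mmapZ mmapX /mmap1 big_ord_recr /= mulrA; congr (_ * _ * _).
by apply: eq_bigr => i _; rewrite mnmE.
Qed.

Lemma qeval_eq0_algebraic_prefix N (w : 'I_N -> C) (P : {mpoly rat[N]}) :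
  P != 0 -> qeval w P = 0 -> exists i : 'I_N, algebraic_gen (take i (codom w)) (w i).
Proof.
elim: N w P => [|N IH] w P P0 wP.
  have eP : P = (P@_0%MM)%:MP.
    by apply/mpolyP => m; rewrite mcoeffC (_ : m = 0%MM) ?eqxx ?mulr1 //; apply/mnmP => -[].
  by move: P0 wP; rewrite eP qevalC mpolyC_eq0 => /negbTE c0 /eqP; rewrite fmorph_eq0 c0.
pose w' j := w (widen_ord (leqnSn N) j).
have uP0 : muni P != 0 by apply: contra_neq P0; apply: muni_eq0.
have [Pw'0 | Pw'0] := eqVneq (map_poly (qeval w') (muni P)) 0.
  have lc0 : lead_coef (muni P) != 0 by rewrite lead_coef_eq0.
  have lcw' : qeval w' (lead_coef (muni P)) = 0 by rewrite -coef_map Pw'0 coef0.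
  have [i hi] := IH w' _ lc0 lcw'.
  exists (widen_ord (leqnSn N) i).
  by rewrite take_codom_widen; [exact: hi | exact: ltnW (ltn_ord i)].
exists ord_max; rewrite take_codom_widen // take_oversize ?size_codom_ord //.
exists (map_poly (qeval w') (muni P)); split=> //; split; last by rewrite /root -qeval_muni wP.
move=> k; rewrite coef_map; apply: qeval_mem; first exact: gen_field_subfield.
by move=> j; apply/gen_field_mem/codom_f.
Qed.

Lemma qeval_mmapX n k (w : 'I_n -> C) (sg : 'I_k -> 'I_n) (q : {mpoly rat[k]}) :
  qeval w (mmap (@mpolyC n rat) (fun j => 'X_(sg j)) q) = qeval (fun j => w (sg j)) q.
Proof.
rewrite [mmap _ _ _]/mmap rmorph_sum [RHS]qevalE; apply: eq_bigr => m _.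
rewrite rmorphM /= qevalC rmorph_prod; congr (_ * _); apply: eq_bigr => j _.
by rewrite rmorphXn /= qevalX.
Qed.

Lemma alg_indep_transcendental_prefix N (w : 'I_N -> C) :
  alg_indep w -> forall i : 'I_N, ~ algebraic_gen (take i (codom w)) (w i).
Proof.
move=> indep i [p [p0 [hp pw]]].
set s := take i (codom w).
have le_sN : (size s <= N)%N by rewrite size_take size_codom_ord ltn_ord ltnW.
pose sg j := widen_ord le_sN j.
have sg_lt j : (sg j < i)%N by rewrite (leq_trans (ltn_ord j)) // size_take size_codom_ord ltn_ord.
have [c [q [c0 qp]]] := clear_poly_denominators hp.
pose P := (map_poly (mmap (@mpolyC N rat) (fun j => 'X_(sg j))) q).['X_i].
have qeval_P w2 : (forall j, w2 (sg j) = w (sg j)) -> qeval w2 P = c * p.[w2 i].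
  move=> w2w; rewrite -horner_map /= qevalX -map_poly_comp -hornerZ -qp.
  congr _.[_]; apply: eq_map_poly => r /=; rewrite qeval_mmapX; congr qeval.
  apply: funext => j; rewrite w2w /s (tnth_nth 0) /= nth_take ?sg_lt //.
  by rewrite (nth_codom_ord w (sg j)).
have P0 : P = 0 by apply: indep; rewrite qeval_P // (rootP pw) mulr0.
(* Moving the i-th coordinate of w to a non-root of p contradicts P = 0. *)
have /closed_nonrootP [t pt] := p0.
pose w2 j := if j == i then t else w j.
have w2w j : w2 (sg j) = w (sg j) by rewrite /w2 -val_eqE (ltn_eqF (sg_lt j)).
move: (qeval_P w2 w2w); rewrite P0 rmorph0 /w2 eqxx => /esym/eqP.
by rewrite mulf_eq0 (negbTE c0) -rootE (negbTE pt).
Qed.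

End AlgebraicIndependence.

Section Ladder.
Variable R : realType.
Local Notation C := R[i].
Variables (b lnb : C) (m : nat) (a : 'I_m -> C).
Hypotheses (HS : Schanuel R) (b_alg : algebraicQ b) (b_neq1 : b != 1)
  (lnbE : cexp lnb = b) (a_ladder : ladder lnb a)
  (a_indep : forall (c0 : rat) (c : 'I_m -> rat),
      ratr c0 + \sum_(i < m) ratr (c i) * a i = 0 -> c0 = 0 /\ forall i, c i = 0).

Local Notation ba k := (cpow lnb (a k)).
Local Notation F k := (ladderF lnb a k).

Lemma lnb_neq0 : lnb != 0.
Proof.
apply: contra_neq b_neq1 => lnb0; rewrite -lnbE lnb0 /cexp /=.
by rewrite expR0 cos0 sin0 !mul1r.
Qed.

Definition ladder_logs (j : 'I_m.+1) : C :=
  if unlift ord0 j is Some k then a k * lnb else lnb.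

Lemma ladder_logs_indep : Qlin_indep ladder_logs.
Proof.
move=> c hc.
have : (ratr (c ord0) + \sum_(k < m) ratr (c (lift ord0 k)) * a k) * lnb = 0.
  rewrite -[RHS]hc big_ord_recl /ladder_logs unlift_none mulrDl big_distrl.
  by congr (_ + _); apply: eq_bigr => k _; rewrite liftK mulrA.
move=> /eqP; rewrite mulf_eq0 (negbTE lnb_neq0) orbF => /eqP /a_indep [c00 ck] j.
by have [k ->|->] := unliftP ord0 j.
Qed.

Lemma trdeg_ladder_gt (X : seq C) : size X = m -> algebraic_gen X lnb ->
  (forall k, algebraic_gen X (a k) /\ algebraic_gen X (ba k)) -> False.
Proof.
move=> sizeX Xlnb Xa; have [f [_ indep]] := HS ladder_logs_indep.
set y := fun i => _ in indep.
have Xy i : algebraic_gen X (y i).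
  rewrite /y; case: split => k; rewrite /ladder_logs; case: unlift => [k'|] //.
  - exact: (subfieldM (algebraic_gen_subfield X)) (Xa k').1 Xlnb.
  - exact: (Xa k').2.
  - by rewrite lnbE; apply: algebraicQ_gen.
suff : (size (codom y) <= size X)%N by rewrite size_codom_ord sizeX ltnn.
apply: (transcendental_chain_size (u := [::])) => [i | _ /codomP [j ->] //].
rewrite size_codom_ord => lt_im.
by have := alg_indep_transcendental_prefix (i := Ordinal lt_im) indep; rewrite (nth_codom_ord y (Ordinal lt_im)).
Qed.

Lemma ladderF_min (S : C -> Prop) (hS : is_subfield S) (k : nat) :
  (forall j : 'I_m, (j < k)%N -> S (a j) /\ S (ba j)) -> forall z, F k z -> S z.
Proof.
move=> Sa; have Sj (j : 'I_m) : j \in [seq j <- enum 'I_m | (nat_of_ord j < k)%N] -> S (a j) /\ S (ba j).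
  by rewrite mem_filter => /andP [/Sa].
apply: gen_field_min => // c; rewrite mem_cat => /orP [] /mapP [x].
  by move=> /Sj [Sax _] ->.
by move=> /mapP [j /Sj [_ Sbaj] ->] ->.
Qed.

Definition covered (X : seq C) (k : 'I_m) :=
  (algebraic_over (F k) (a k) \/ algebraic_gen X (a k)) /\
  (algebraic_over (F k) (ba k) \/ algebraic_gen X (ba k)).

Lemma covered_algebraic (X : seq C) : (forall k, covered X k) ->
  forall k, algebraic_gen X (a k) /\ algebraic_gen X (ba k).
Proof.
move=> cov; suff Xa n (k : 'I_m) : (k < n)%N ->
    algebraic_gen X (a k) /\ algebraic_gen X (ba k) by move=> k; apply: (Xa k.+1).
elim: n k => [//|n IH] k lt_kn.
have FX z : algebraic_over (F k) z -> algebraic_gen X z.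
  apply: algebraic_over_gen; apply: ladderF_min; first exact: algebraic_gen_subfield.
  by move=> j lt_jk; apply: IH; apply: leq_trans lt_jk lt_kn.
by case: (cov k) => -[/FX ? | ?] [/FX ? | ?]; split.
Qed.

Definition pick (k : 'I_m) : C :=
  if `[< algebraic_over (F k) (a k) >] then ba k else a k.

Lemma covered_pick (X : seq C) k : algebraic_gen X (pick k) -> covered X k.
Proof.
rewrite /pick; case: asboolP => [Fa Xba | Fa Xa]; first by split; [left | right].
by case: (a_ladder k) => // Fba; split; [right | left].
Qed.

Lemma lnb_transcendental_picks : ~ algebraic_gen (codom pick) lnb.
Proof.
move=> Xlnb; apply: (trdeg_ladder_gt (X := codom pick)) => //; first exact: size_codom_ord.
by apply: covered_algebraic => k; apply/covered_pick/algebraic_gen_mem/codom_f.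
Qed.

Definition pick_drop (k : 'I_m) : seq C := lnb :: [seq pick j | j <- rem k (enum 'I_m)].

Lemma size_pick_drop k : size (pick_drop k) = m.
Proof.
by rewrite /= size_map size_rem ?mem_enum // size_enum_ord prednK // (leq_ltn_trans _ (ltn_ord k)).
Qed.

Lemma mem_pick_drop k j : j != k -> pick j \in pick_drop k.
Proof.
move=> jk; rewrite inE; apply/orP; right; apply: map_f.
by rewrite (mem_rem_uniq _ (enum_uniq _)) inE jk mem_enum.
Qed.

Lemma covered_pick_drop k : ~ covered (pick_drop k) k.
Proof.
move=> cov_k; apply: (trdeg_ladder_gt (X := pick_drop k)).
- exact: size_pick_drop.
- by apply: algebraic_gen_mem; rewrite mem_head.
- apply: covered_algebraic => j; have [-> // | jk] := eqVneq j k.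
  exact/covered_pick/algebraic_gen_mem/mem_pick_drop.
Qed.

Lemma ladder_exactly_one (k : 'I_m) :
  ~ algebraic_over (F k) (a k) <-> algebraic_over (F k) (ba k).
Proof.
split; first by case: (a_ladder k).
by move=> Fba Fa; apply: (@covered_pick_drop k); split; left.
Qed.

Lemma transcendental_pick (c : C) (k : 'I_m) :
  c = a k \/ c = ba k -> ~ algebraic_over (F k) c -> c = pick k.
Proof.
move=> [] -> Fc; rewrite /pick; case: asboolP => // Fa; exfalso.
by apply: Fc => //; apply/ladder_exactly_one.
Qed.

Lemma alg_indep_lnb_picks :
  alg_indep (fun j : 'I_m.+1 => if unlift ord0 j is Some k then pick k else lnb).
Proof.
set w := fun j => _; move=> P wP; have [// | P0] := eqVneq P 0; exfalso.
have [l] := qeval_eq0_algebraic_prefix P0 wP.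
case: (unliftP ord0 l) => [k -> | ->]; rewrite /w ?liftK ?unlift_none => Xw.
  apply: (@covered_pick_drop k); apply: covered_pick; apply: algebraic_gen_sub Xw.
  move=> _ /mem_take_codom [j lt_jk ->]; rewrite /w.
  case: (unliftP ord0 j) lt_jk => [j' -> | -> _]; rewrite ?liftK ?unlift_none.
    by rewrite !lift0 ltnS => lt_jk; apply: mem_pick_drop; rewrite -val_eqE neq_ltn lt_jk.
  exact: mem_head.
by apply: lnb_transcendental_picks; apply: algebraic_gen_sub Xw => c; rewrite take0.
Qed.

Lemma alg_indep_lnb_transcendentals (bk : 'I_m -> C) :
  (forall k, (bk k = a k \/ bk k = ba k) /\ ~ algebraic_over (F k) (bk k)) ->
  alg_indep (fun j : 'I_m.+1 => if unlift ord0 j is Some k then bk k else lnb).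
Proof.
move=> bk_trans; have -> : bk = pick.
  by apply: funext => k; have [bkE Fbk] := bk_trans k; apply: transcendental_pick.
exact: alg_indep_lnb_picks.
Qed.

Lemma lnb_transcendental_ladderF : ~ algebraic_over (F m) lnb.
Proof.
move=> Flnb; apply: lnb_transcendental_picks; apply: algebraic_over_gen Flnb.
apply: ladderF_min; first exact: algebraic_gen_subfield.
have Xa := covered_algebraic (fun k => covered_pick (algebraic_gen_mem (codom_f pick k))).
by move=> j _; apply: Xa.
Qed.

End Ladder.

Unset Implicit Arguments.
Set Strict Implicit.
Set Printing Implicit Defensive.

Theorem lemma11p4 (R : realType) (HS : Schanuel R)
  (b lnb : R[i]) (hbalg : algebraicQ b) (hb0 : b != 0) (hb1 : b != 1)
  (hlnb : cexp lnb = b)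
  (m : nat) (a : 'I_m -> R[i]) (hlad : ladder lnb a)
  (hindep : forall (c0 : rat) (c : 'I_m -> rat),
      ratr c0 + \sum_(i < m) ratr (c i) * a i = 0 ->
      c0 = 0 /\ forall i, c i = 0) :
  (forall k : 'I_m,
     ~ algebraic_over (ladderF lnb a k) (a k) <->
       algebraic_over (ladderF lnb a k) (cpow lnb (a k))) /\
  (forall bk : 'I_m -> R[i],
     (forall k : 'I_m, (bk k = a k \/ bk k = cpow lnb (a k)) /\
                       ~ algebraic_over (ladderF lnb a k) (bk k)) ->
     alg_indep (fun j : 'I_m.+1 => if unlift ord0 j is Some k then bk k else lnb)) /\
  ~ algebraic_over (ladderF lnb a m) lnb.
Proof.
split; first exact: (ladder_exactly_one HS hbalg hb1 hlnb hlad hindep).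
split; first exact: (alg_indep_lnb_transcendentals HS hbalg hb1 hlnb hlad hindep).
exact: (lnb_transcendental_ladderF HS hbalg hb1 hlnb hlad hindep).
Qed.
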